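(* A connected graph $G$ is Ricci-flat and has girth $g(G)\ge 5$ if and only if $G$ is one of the following: the path $P_n$ ($n\ge 2$), the infinite ray, the infinite (two-sided) path, the cycle $C_n$ ($n\ge 5$), or the star graph $T_n$ ($n\ge 3$).
   Context: Graphs are locally finite and unweighted; the girth is the length of a shortest cycle (infinite for trees). $d_G$ is the shortest-path metric, $N_G(v)$ the neighbour set and $d_v$ the degree of $v$; $m_v$ is the uniform probability measure on $N_G(v)$, and for an edge $(x,y)$, $\kappa(x,y)=1-W_1(m_x,m_y)$, where $W_1$ is the Wasserstein-1 (transportation) distance with respect to $d_G$. $G$ is Ricci-flat if $\kappa(x,y)=0$ for every edge $(x,y)\in E(G)$. $P_n$ is the path on $n$ vertices, $C_n$ the cycle on $n$ vertices, and the star $T_n$ is a tree with one central vertex adjacent to all other vertices, which are leaves. *)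

From HB Require Import structures.
From mathcomp Require Import all_boot all_order all_algebra.
From mathcomp Require Import classical_sets boolp reals Rstruct.
From Stdlib Require Rdefinitions.
Notation R := Rdefinitions.R.

Set Implicit Arguments.
Unset Strict Implicit.
Unset Printing Implicit Defensive.

Import Order.TTheory GRing.Theory Num.Theory.
Local Open Scope ring_scope.
Local Open Scope classical_set_scope.

(* A locally finite simple graph on a vertex type V is given by its
   (finite, duplicate-free) adjacency lists nb x = N_G(x). *)
Section Graph.
Variable V : eqType.
Variable nb : V -> seq V.

Definition adj : rel V := fun x y => y \in nb x.

Definition lf_simple_graph : Prop :=
  [/\ forall x, uniq (nb x),
      forall x, x \notin nb x &
      forall x y, (y \in nb x) = (x \in nb y)].

(* walks from x to y, given by the sequence of vertices after x *)
Definition walk (x y : V) (p : seq V) : bool := path adj x p && (last x p == y).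

Definition connected : Prop := forall x y : V, exists p, walk x y p.

Definition dist (x y : V) : R :=
  inf [set ((size p)%:R : R) | p in [set p | walk x y p]].

Definition deg (x : V) : nat := size (nb x).

Definition unif (x : V) (u : V) : R :=
  if u \in nb x then (deg x)%:R^-1 else 0.

(* transport plans (couplings) between m_x and m_y; a coupling is
   necessarily supported on supp m_x * supp m_y = N(x) * N(y) *)
Definition coupling (x y : V) (pi : V -> V -> R) : Prop :=
  [/\ forall u v, 0 <= pi u v,
      forall u v, pi u v != 0 -> (u \in nb x) && (v \in nb y),
      forall u, \sum_(v <- nb y) pi u v = unif x u &
      forall v, \sum_(u <- nb x) pi u v = unif y v].

Definition transport_cost (x y : V) (pi : V -> V -> R) : R :=
  \sum_(u <- nb x) \sum_(v <- nb y) pi u v * dist u v.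

Definition W1 (x y : V) : R :=
  inf [set transport_cost x y pi | pi in [set pi | coupling x y pi]].

Definition kappa (x y : V) : R := 1 - W1 x y.

Definition ricci_flat : Prop := forall x y, adj x y -> kappa x y = 0.

Definition graph_cycle (c : seq V) : bool :=
  [&& cycle adj c, uniq c & 3 <= size c]%N.

(* girth(G) >= g : every cycle has length >= g (girth = +oo for acyclic G) *)
Definition girth_ge (g : nat) : Prop :=
  forall c, graph_cycle c -> (g <= size c)%N.

Definition isomorphic (W : Type) (r : W -> W -> Prop) : Prop :=
  exists f : V -> W, bijective f /\ forall x y, adj x y <-> r (f x) (f y).

End Graph.

Definition path_graph (n : nat) : 'I_n -> 'I_n -> Prop :=
  fun i j => (i.+1 = j :> nat) \/ (j.+1 = i :> nat).
Definition ray_graph : nat -> nat -> Prop :=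
  fun i j => i.+1 = j \/ j.+1 = i.
Definition line_graph : int -> int -> Prop :=
  fun i j => i + 1 = j \/ j + 1 = i.
Definition cycle_graph (n : nat) : 'I_n -> 'I_n -> Prop :=
  fun i j => (j = i.+1 %% n :> nat)%N \/ (i = j.+1 %% n :> nat)%N.
(* star T_n on n vertices: center 0, leaves 1..n-1 *)
Definition star_graph (n : nat) : 'I_n -> 'I_n -> Prop :=
  fun i j => ((i = 0 :> nat) /\ (j <> 0 :> nat)) \/ ((j = 0 :> nat) /\ (i <> 0 :> nat)).

(* Let xy be an edge of a graph without triangles and 4-cycles. Distinct
   neighbours u of x and v of y are then at distance 2 unless u = y or v = x,
   so every coupling of m_x and m_y costs at least 2 - 1/d_x - 1/d_y, and no
   coupling costs less than 1 since x and y have no common neighbour.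
   Conversely, if d_x = 1, d_y = 1 or d_x = d_y = 2, some coupling moves all the
   mass along edges, so W_1 = 1. Hence, for girth >= 5, Ricci-flatness means
   that every edge has an endpoint of degree 1 or two endpoints of degree <= 2.
   In a connected graph with this property, a vertex of degree >= 3 forces all
   its neighbours to be leaves, which gives a star. Otherwise all degrees are
   <= 2, and the non-backtracking walk starting at a leaf, or running in both
   directions from an edge when there is no leaf, enumerates the graph as a
   path, a ray, a two-sided path or a cycle, of length >= 5 by the girth. *)

From Pilot Require Import Defs.
From mathcomp Require Import all_boot all_order all_algebra.
From mathcomp Require Import classical_sets boolp reals Rstruct.
From mathcomp Require Import zify ring lra.
Import Order.TTheory GRing.Theory Num.Theory.
Local Open Scope ring_scope.
Local Open Scope classical_set_scope.

Set Implicit Arguments.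
Unset Strict Implicit.
Unset Printing Implicit Defensive.

Section RelationProperties.
Variables (W : Type) (r : W -> W -> Prop).

Definition triangle_free : Prop := forall a b c, r a b -> r b c -> r c a -> False.

Definition square_free : Prop :=
  forall a b c d, r a b -> r b c -> r c d -> r d a -> a <> c -> b <> d -> False.

Definition unique_neighbour (i j : W) : Prop := forall k, r i k -> k = j.

Definition at_most_one_other_neighbour (i j : W) : Prop :=
  forall k1 k2, r i k1 -> r i k2 -> k1 = j \/ k2 = j \/ k1 = k2.

(* In degree terms: d_i = 1, or d_j = 1, or d_i, d_j <= 2. *)
Definition flat_edge (i j : W) : Prop :=
  [\/ unique_neighbour i j, unique_neighbour j i |
      at_most_one_other_neighbour i j /\ at_most_one_other_neighbour j i].

Definition flat_edge_condition : Prop := forall i j, r i j -> flat_edge i j.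

Definition flat_girth5 : Prop :=
  [/\ triangle_free, square_free & flat_edge_condition].

End RelationProperties.

Section Embedding.
Variables (A B : Type) (ra : A -> A -> Prop) (rb : B -> B -> Prop) (f : A -> B).
Hypotheses (f_inj : injective f) (f_rel : forall x y, ra x y <-> rb (f x) (f y)).

Lemma unique_neighbour_inj i j :
  unique_neighbour rb (f i) (f j) -> unique_neighbour ra i j.
Proof. by move=> H k /f_rel /H /f_inj. Qed.

Lemma at_most_one_other_neighbour_inj i j :
  at_most_one_other_neighbour rb (f i) (f j) -> at_most_one_other_neighbour ra i j.
Proof.
move=> H k1 k2 /f_rel h1 /f_rel h2.
by case: (H _ _ h1 h2) => [/f_inj|[/f_inj|/f_inj]]; auto.
Qed.

Lemma flat_girth5_inj : flat_girth5 rb -> flat_girth5 ra.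
Proof.
case=> tri sq cond; split=> [a b c|a b c d|i j].
- by rewrite !f_rel; apply: tri.
- by rewrite !f_rel => h1 h2 h3 h4 nac nbd; apply: (sq _ _ _ _ h1 h2 h3 h4) => /f_inj.
- rewrite f_rel => /cond [/unique_neighbour_inj|/unique_neighbour_inj|[]]; try by constructor.
  by move=> /at_most_one_other_neighbour_inj ? /at_most_one_other_neighbour_inj ?; constructor.
Qed.

End Embedding.

Lemma ord_eqE n (i j : 'I_n) : i = j <-> (i : nat) = j.
Proof. by split=> [->|/val_inj]. Qed.

Lemma flat_girth5_path n : flat_girth5 (@path_graph n).
Proof.
rewrite /flat_girth5 /triangle_free /square_free /flat_edge_condition.
rewrite /at_most_one_other_neighbour /path_graph; split.
- lia.
- by move=> a b c d; rewrite !ord_eqE; lia.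
- by move=> i j hij; constructor 3; split=> k1 k2; rewrite !ord_eqE; lia.
Qed.

Lemma flat_girth5_ray : flat_girth5 ray_graph.
Proof.
rewrite /flat_girth5 /triangle_free /square_free /flat_edge_condition.
rewrite /at_most_one_other_neighbour /ray_graph; split.
- lia.
- lia.
- by move=> i j hij; constructor 3; split=> k1 k2; lia.
Qed.

Lemma flat_girth5_line : flat_girth5 line_graph.
Proof.
rewrite /flat_girth5 /triangle_free /square_free /flat_edge_condition.
rewrite /at_most_one_other_neighbour /line_graph; split.
- lia.
- lia.
- by move=> i j hij; constructor 3; split=> k1 k2; lia.
Qed.

Lemma cycle_graphE n (i j : 'I_n) : cycle_graph i j <->
  ((j : nat) = i.+1 /\ (i.+1 < n)%N) \/ (i.+1 = n /\ (j : nat) = 0%N) \/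
  ((i : nat) = j.+1 /\ (j.+1 < n)%N) \/ (j.+1 = n /\ (i : nat) = 0%N).
Proof.
have mod_succ k : (k < n)%N -> (k.+1 %% n = if k.+1 == n then 0 else k.+1)%N.
  by move=> hk; case: eqP => [->|ne]; rewrite ?modnn // modn_small //; lia.
rewrite /cycle_graph (mod_succ _ (ltn_ord i)) (mod_succ _ (ltn_ord j)).
have := ltn_ord i; have := ltn_ord j.
by case: eqP; case: eqP; lia.
Qed.

Lemma flat_girth5_cycle n : (5 <= n)%N -> flat_girth5 (@cycle_graph n).
Proof.
move=> n_ge5; rewrite /flat_girth5 /triangle_free /square_free /flat_edge_condition.
rewrite /at_most_one_other_neighbour; split.
- move=> a b c; rewrite !cycle_graphE.
  by have := ltn_ord a; have := ltn_ord b; have := ltn_ord c; lia.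
- move=> a b c d; rewrite !cycle_graphE !ord_eqE.
  have := ltn_ord a; have := ltn_ord b; have := ltn_ord c; have := ltn_ord d.
  lia.
- move=> i j hij; constructor 3; split=> k1 k2; move: hij; rewrite !cycle_graphE !ord_eqE;
  by have := ltn_ord i; have := ltn_ord j; have := ltn_ord k1; have := ltn_ord k2; lia.
Qed.

Lemma flat_girth5_star n : flat_girth5 (@star_graph n).
Proof.
rewrite /flat_girth5 /triangle_free /square_free /flat_edge_condition.
rewrite /unique_neighbour /star_graph; split.
- lia.
- by move=> a b c d; rewrite !ord_eqE; lia.
- move=> i j hij; have [i0|i_neq0] := eqVneq (i : nat) 0%N.
    by constructor 2 => k; rewrite ord_eqE; lia.
  by constructor 1 => k; rewrite ord_eqE; lia.
Qed.

Lemma int_cases (i : int) : exists k : nat, i = k%:Z \/ i = - (k.+1)%:Z.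
Proof. by case: i => k; exists k; [left | right; rewrite NegzE]. Qed.

Notation edge nb := (fun x y => is_true (adj nb x y)).

Section Graph.
Variables (V : eqType) (nb : V -> seq V).
Hypothesis graphG : lf_simple_graph nb.

Local Notation adj := (adj nb).
Local Notation deg := (deg nb).

Lemma adj_sym x y : adj x y = adj y x.
Proof. by case: graphG => _ _ H; rewrite /Defs.adj H. Qed.

Lemma adj_irr x : ~~ adj x x.
Proof. by case: graphG => _ H _; apply: H. Qed.

Lemma adj_neq x y : adj x y -> x != y.
Proof. by apply: contraTneq => ->; apply: adj_irr. Qed.

Lemma nb_uniq x : uniq (nb x).
Proof. by case: graphG. Qed.

Lemma deg_gt0 x y : adj x y -> (0 < deg x)%N.
Proof. by rewrite /Defs.deg /Defs.adj; case: (nb x). Qed.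

Lemma nb_deg1 x y : adj x y -> deg x = 1%N -> nb x = [:: y].
Proof.
rewrite /Defs.adj /Defs.deg; case: (nb x) => [|a [|b s]] //=.
by rewrite inE => /eqP ->.
Qed.

Lemma nb_deg2 x y : adj x y -> deg x = 2%N ->
  exists2 a, a != y & perm_eq (nb x) [:: y; a].
Proof.
have := nb_uniq x; rewrite /Defs.adj /Defs.deg.
case: (nb x) => [|a [|b [|c s]]] //=; rewrite !inE andbT => nab.
case/orP=> /eqP -> _; first by exists b; rewrite // eq_sym.
by exists a => //; rewrite (perm_catC [:: a] [:: b]).
Qed.

Lemma deg1P x y : adj x y -> deg x = 1%N <-> unique_neighbour (edge nb) x y.
Proof.
move=> hxy; split=> [/(nb_deg1 hxy) hx z|hu].
  by rewrite /Defs.adj hx inE => /eqP.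
apply/eqP; rewrite eqn_leq (deg_gt0 hxy) andbT.
apply: (@uniq_leq_size _ _ [:: y]); first exact: nb_uniq.
by move=> z hz; rewrite inE (hu z hz).
Qed.

Lemma deg_le2P x y : adj x y ->
  (deg x <= 2)%N <-> at_most_one_other_neighbour (edge nb) x y.
Proof.
move=> hxy; split=> [hx k1 k2 h1 h2|H].
  apply: contrapT => H; have: (3 <= deg x)%N; last by rewrite leqNgt ltnS hx.
  apply: (@uniq_leq_size _ [:: y; k1; k2]); last first.
    by move=> z; rewrite !inE => /or3P[] /eqP ->.
  rewrite /= !inE !negb_or andbT.
  by apply/andP; split; [apply/andP; split|]; apply/eqP => E; apply: H; subst; auto.
set a := head y [seq z <- nb x | z != y].
apply: (@uniq_leq_size _ _ [:: y; a]); first exact: nb_uniq.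
move=> z hz; rewrite !inE; case: eqP => //= /eqP nzy.
have : a \in [seq z <- nb x | z != y].
  have : z \in [seq z <- nb x | z != y] by rewrite mem_filter nzy.
  by rewrite /a; case: [seq _ <- _ | _] => //= b l _; rewrite mem_head.
rewrite mem_filter => /andP[nay ha].
by case: (H z a hz ha) => [E|[E|->]] //; [rewrite E eqxx in nzy | rewrite E eqxx in nay].
Qed.

Hypothesis connectedG : connected nb.
Local Notation dist := (dist nb).
Local Notation unif := (unif nb).
Local Notation W1 := (W1 nb).
Local Notation cost := (transport_cost nb).

Lemma dist_set_neq0 u v :
  [set ((size p)%:R : R) | p in [set p | walk nb u v p]] !=set0.
Proof. by case: (connectedG u v) => p hp; exists (size p)%:R; exists p. Qed.

Lemma dist_ge0 u v : 0 <= dist u v.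
Proof. by apply: lb_le_inf; [exact: dist_set_neq0 | move=> _ [p _ <-]]. Qed.

Lemma dist_ge1 u v : u != v -> 1 <= dist u v.
Proof.
move=> nuv; apply: lb_le_inf => [|_ [[|a p] hp <-]]; first exact: dist_set_neq0.
  by move: hp; rewrite /walk /= => /eqP e; rewrite e eqxx in nuv.
by rewrite ler1n.
Qed.

Lemma dist_ge2 u v : u != v -> ~~ adj u v -> 2 <= dist u v.
Proof.
move=> nuv nadj; apply: lb_le_inf => [|_ [[|a [|b p]] hp <-]].
- exact: dist_set_neq0.
- by move: hp; rewrite /walk /= => /eqP e; rewrite e eqxx in nuv.
- by move: hp; rewrite /walk /= andbT => /andP[h /eqP e]; rewrite -e h in nadj.
- by rewrite ler_nat.
Qed.

Lemma dist_le1 u v : adj u v -> dist u v <= 1.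
Proof.
move=> huv; apply: ge_inf; first by exists 0 => _ [p _ <-].
by exists [:: v] => //; rewrite /walk /= huv eqxx.
Qed.

Lemma unif_nb x u : u \in nb x -> unif x u = (deg x)%:R^-1.
Proof. by rewrite /Defs.unif => ->. Qed.

Lemma unif_ge0 x u : 0 <= unif x u.
Proof. by rewrite /Defs.unif; case: ifP => // _; rewrite invr_ge0. Qed.

Lemma sum_unif x y : adj x y -> \sum_(u <- nb x) unif x u = 1.
Proof.
move=> hxy; rewrite big_seq (eq_bigr (fun=> (deg x)%:R^-1)) => [|u]; last exact: unif_nb.
rewrite -big_seq big_const_seq count_predT iter_addr_0 -[_ *+ _]mulr_natr mulVf //.
by rewrite pnatr_eq0 -lt0n (deg_gt0 hxy).
Qed.

Lemma product_coupling x y : adj x y ->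
  coupling nb x y (fun u v => unif x u * unif y v).
Proof.
move=> hxy; have hyx : adj y x by rewrite adj_sym.
split=> [u v|u v|u|v].
- by rewrite mulr_ge0 // unif_ge0.
- by rewrite /Defs.unif; case: (u \in nb x); case: (v \in nb y); rewrite ?mul0r ?mulr0 ?eqxx.
- by rewrite -big_distrr /= (sum_unif hyx) mulr1.
- by rewrite -big_distrl /= (sum_unif hxy) mul1r.
Qed.

Lemma cost_ge0 x y pi : coupling nb x y pi -> 0 <= cost x y pi.
Proof.
case=> pi_ge0 _ _ _; apply: sumr_ge0 => u _; apply: sumr_ge0 => v _.
by rewrite mulr_ge0 // dist_ge0.
Qed.

Lemma W1_le_cost x y pi : coupling nb x y pi -> W1 x y <= cost x y pi.
Proof.
move=> hpi; apply: ge_inf; last by exists pi.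
by exists 0 => _ [p hp <-]; apply: cost_ge0.
Qed.

Lemma W1_ge x y c : adj x y ->
  (forall pi, coupling nb x y pi -> c <= cost x y pi) -> c <= W1 x y.
Proof.
move=> hxy H; apply: lb_le_inf => [|_ [pi hpi <-]]; last exact: H.
have := product_coupling hxy; set pi := fun u v => _ => hpi.
by exists (cost x y pi), pi.
Qed.

Lemma coupling_mass x y pi : adj x y -> coupling nb x y pi ->
  \sum_(u <- nb x) \sum_(v <- nb y) pi u v = 1.
Proof.
by move=> hxy [_ _ H _]; rewrite -(sum_unif hxy); apply: eq_bigr => u _; apply: H.
Qed.

Definition edge_supported (pi : V -> V -> R) : Prop :=
  forall u v, pi u v != 0 -> adj u v.

Lemma cost_le1 x y pi : adj x y -> coupling nb x y pi -> edge_supported pi ->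
  cost x y pi <= 1.
Proof.
move=> hxy hpi hsupp; rewrite -(coupling_mass hxy hpi).
apply: ler_sum => u _; apply: ler_sum => v _.
have [->|nz] := eqVneq (pi u v) 0; first by rewrite mul0r.
case: hpi => pi_ge0 _ _ _.
by rewrite -{2}(mulr1 (pi u v)) ler_wpM2l // dist_le1 // hsupp.
Qed.

Lemma W1_ge1 x y : triangle_free (edge nb) -> adj x y -> 1 <= W1 x y.
Proof.
move=> tri hxy; apply: W1_ge => // pi hpi.
rewrite -(coupling_mass hxy hpi) big_seq [leRHS]big_seq.
apply: ler_sum => u hu; rewrite big_seq [leRHS]big_seq; apply: ler_sum => v hv.
case: hpi => pi_ge0 _ _ _; rewrite -{1}(mulr1 (pi u v)) ler_wpM2l // dist_ge1 //.
by apply/eqP => e; subst v; apply: (tri x u y) => //; rewrite adj_sym.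
Qed.

Lemma kappa_eq0 x y pi : triangle_free (edge nb) -> adj x y ->
  coupling nb x y pi -> edge_supported pi -> kappa nb x y = 0.
Proof.
move=> tri hxy hpi hsupp; apply/eqP; rewrite /kappa subr_eq0 eq_sym eq_le W1_ge1 // andbT.
exact: le_trans (W1_le_cost hpi) (cost_le1 hxy hpi hsupp).
Qed.

Lemma coupling_transpose x y pi :
  coupling nb x y pi -> coupling nb y x (fun u v => pi v u).
Proof.
case=> pi_ge0 supp mx my; split=> // u v nz.
by rewrite andbC; apply: supp.
Qed.

Lemma edge_supported_transpose pi :
  edge_supported pi -> edge_supported (fun u v => pi v u).
Proof. by move=> hsupp u v /hsupp; rewrite adj_sym. Qed.

Lemma leaf_coupling x y : adj x y -> deg x = 1%N ->
  exists2 pi, coupling nb x y pi & edge_supported pi.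
Proof.
move=> hxy /(nb_deg1 hxy) hx; have hyx : adj y x by rewrite adj_sym.
have unif_x u : unif x u = (u == y)%:R.
  by rewrite /Defs.unif /Defs.deg hx inE; case: (u == y); rewrite /= ?invr1.
exists (fun u v => (u == y)%:R * unif y v).
  split=> [u v|u v|u|v].
  - by rewrite mulr_ge0 ?unif_ge0.
  - rewrite hx inE; case: (u == y); last by rewrite mul0r eqxx.
    by rewrite mul1r /Defs.unif; case: ifP => //; rewrite eqxx.
  - by rewrite -big_distrr /= (sum_unif hyx) mulr1 unif_x.
  - by rewrite hx big_seq1 eqxx mul1r.
move=> u v; have [->|] := eqVneq u y; last by rewrite mul0r eqxx.
by rewrite mul1r /Defs.unif; case: ifP => //; rewrite eqxx.
Qed.

Lemma unif_deg2 x y a u : deg x = 2%N -> perm_eq (nb x) [:: y; a] ->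
  unif x u = ((u == y) || (u == a))%:R / 2.
Proof.
move=> dx hp; rewrite /Defs.unif (perm_mem hp) !inE dx.
by case: (_ || _); rewrite /= ?mul1r ?mul0r.
Qed.

(* Along the path a - x - y - b, move the mass at y to b and the mass at a to x. *)
Lemma deg2_coupling x y : adj x y -> deg x = 2%N -> deg y = 2%N ->
  exists2 pi, coupling nb x y pi & edge_supported pi.
Proof.
move=> hxy dx dy; have hyx : adj y x by rewrite adj_sym.
have [a nay pa] := nb_deg2 hxy dx.
have [b nbx pb] := nb_deg2 hyx dy.
have hxa : adj x a by rewrite /Defs.adj (perm_mem pa) !inE eqxx orbT.
have hyb : adj y b by rewrite /Defs.adj (perm_mem pb) !inE eqxx orbT.
have nya : y != a by rewrite eq_sym.
have nxb : x != b by rewrite eq_sym.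
exists (fun u v => ((u == y) && (v == b))%:R / 2 + ((u == a) && (v == x))%:R / 2).
  split=> [u v|u v|u|v].
  - by rewrite addr_ge0 // mulr_ge0 ?invr_ge0.
  - rewrite (perm_mem pa) (perm_mem pb) !inE.
    have [->|nuy] := eqVneq u y.
      rewrite (negbTE nya) /= mul0r addr0.
      by have [->|] := eqVneq v b; rewrite ?mul0r ?eqxx ?orbT.
    rewrite /= mul0r add0r; have [_|] := eqVneq u a; last by rewrite mul0r eqxx.
    by have [_|] := eqVneq v x; rewrite ?mul0r ?eqxx ?orbT.
  - rewrite (perm_big _ pb) !big_cons big_nil /= addr0 (unif_deg2 u dx pa).
    rewrite !eqxx (negbTE nxb) (negbTE nbx) ?andbT ?andbF /=.
    have [->|nuy] := eqVneq u y; first by rewrite (negbTE nya) /=; lra.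
    by case: (u == a); rewrite /=; lra.
  - rewrite (perm_big _ pa) !big_cons big_nil /= addr0 (unif_deg2 v dy pb).
    rewrite !eqxx (negbTE nya) (negbTE nay) ?andbT ?andbF /=.
    have [->|nvx] := eqVneq v x; first by rewrite (negbTE nxb) /=; lra.
    by case: (v == b); rewrite /=; lra.
move=> u v; have [->|nuy] := eqVneq u y.
  rewrite (negbTE nya) /= mul0r addr0.
  by have [->|] := eqVneq v b; rewrite ?mul0r ?eqxx.
rewrite /= mul0r add0r; have [->|] := eqVneq u a; last by rewrite mul0r eqxx.
by have [->|] := eqVneq v x; rewrite ?mul0r ?eqxx // adj_sym.
Qed.

Definition flat_deg (x y : V) : Prop :=
  [\/ deg x = 1%N, deg y = 1%N | (deg x <= 2)%N /\ (deg y <= 2)%N].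

Lemma flat_degP x y : adj x y -> flat_deg x y <-> flat_edge (edge nb) x y.
Proof.
move=> hxy; have hyx : adj y x by rewrite adj_sym.
split; case.
- by move/(deg1P hxy); constructor.
- by move/(deg1P hyx); constructor.
- by case=> /(deg_le2P hxy) ? /(deg_le2P hyx) ?; constructor.
- by move/(deg1P hxy); constructor.
- by move/(deg1P hyx); constructor.
- by case=> /(deg_le2P hxy) ? /(deg_le2P hyx) ?; constructor.
Qed.

Lemma girth_ge5P :
  girth_ge nb 5 <-> triangle_free (edge nb) /\ square_free (edge nb).
Proof.
split=> [girth|[tri sq] c].
  split=> [x y z h1 h2 h3|x y v u h1 h2 h3 h4 /eqP n1 /eqP n2].
    have := girth [:: x; y; z]; rewrite /graph_cycle /= h1 h2 h3 !inE !negb_or.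
    by rewrite (adj_neq h1) (adj_neq h2) (eq_sym x z) (adj_neq h3) => /(_ isT).
  have := girth [:: x; y; v; u]; rewrite /graph_cycle /= h1 h2 h3 h4 !inE !negb_or.
  by rewrite (adj_neq h1) (adj_neq h2) (adj_neq h3) (eq_sym x u) (adj_neq h4) n1 n2 => /(_ isT).
case/and3P; case: c => [|a [|b [|d [|t [|]]]]] //=; rewrite andbT.
  by case/and3P=> h1 h2 h3; case: (@tri a b d h1 h2 h3).
case/and4P=> h1 h2 h3 h4; rewrite !inE !negb_or.
case/and4P=> /and3P[_ /eqP nad _] /andP[_ /eqP nbt] _ _ _.
by case: (@sq a b d t h1 h2 h3 h4 nad nbt).
Qed.

Section FreeOfShortCycles.
Hypotheses (tri : triangle_free (edge nb)) (sq : square_free (edge nb)).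

Lemma dist_nb_ge x y u v : adj x y -> u \in nb x -> v \in nb y ->
  2 - (u == y)%:R - (v == x)%:R <= dist u v.
Proof.
move=> hxy hxu hyv.
have [->|nuy] /= := eqVneq u y.
  apply: le_trans (dist_ge1 (adj_neq hyv)); case: (v == x) => /=; lra.
have [->|nvx] /= := eqVneq v x.
  by apply: le_trans (dist_ge1 _); [lra | rewrite eq_sym adj_neq].
rewrite !subr0; apply: dist_ge2.
  by apply/eqP => e; subst v; apply: (@tri x u y) => //; rewrite adj_sym.
apply/negP => huv; apply: (@sq x u v y) => //; first by rewrite adj_sym.
- by rewrite adj_sym.
- by apply/eqP; rewrite eq_sym.
- exact/eqP.
Qed.

Lemma cost_ge x y pi : adj x y -> coupling nb x y pi ->
  2 - unif x y - unif y x <= cost x y pi.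
Proof.
move=> hxy hpi; have hyx : adj y x by rewrite adj_sym.
have [pi_ge0 _ mx my] := hpi.
apply: le_trans (_ : \sum_(u <- nb x) \sum_(v <- nb y)
   pi u v * (2 - (u == y)%:R - (v == x)%:R) <= _); last first.
  rewrite /transport_cost big_seq [leRHS]big_seq; apply: ler_sum => u hu.
  rewrite big_seq [leRHS]big_seq; apply: ler_sum => v hv.
  by rewrite ler_wpM2l // dist_nb_ge.
have expand u v : pi u v * (2 - (u == y)%:R - (v == x)%:R) =
    2 * pi u v - (u == y)%:R * pi u v - (v == x)%:R * pi u v by ring.
rewrite (eq_bigr (fun u => \sum_(v <- nb y) (2 * pi u v - (u == y)%:R * pi u v)
   - \sum_(v <- nb y) (v == x)%:R * pi u v)); last first.
  by move=> u _; rewrite -sumrB; apply: eq_bigr => v _; rewrite expand.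
rewrite sumrB (exchange_big _ _ _ _ _ (fun u v => (v == x)%:R * pi u v)) /=.
rewrite [X in _ <= _ - X](eq_bigr (fun v => (v == x)%:R * unif y v)); last first.
  by move=> v _; rewrite -big_distrr /= my.
rewrite (eq_bigr (fun u => 2 * unif x u - (u == y)%:R * unif x u)); last first.
  by move=> u _; rewrite sumrB -!big_distrr /= mx.
rewrite sumrB -big_distrr /= (sum_unif hxy) mulr1.
rewrite (bigD1_seq y hxy (nb_uniq x)) (bigD1_seq x hyx (nb_uniq y)) /= !eqxx !mul1r.
by rewrite !big1 ?addr0 // => ? /negbTE ->; rewrite mul0r.
Qed.

Lemma flat_deg_of_kappa_eq0 x y : adj x y -> kappa nb x y = 0 -> flat_deg x y.
Proof.
move=> hxy /eqP; rewrite subr_eq0 /flat_deg => /eqP hW.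
have hyx : adj y x by rewrite adj_sym.
have : 2 - unif x y - unif y x <= 1.
  by rewrite [leRHS]hW; apply: W1_ge => // pi; exact: cost_ge.
rewrite (unif_nb hxy) (unif_nb hyx).
move: (deg x) (deg y) (deg_gt0 hxy) (deg_gt0 hyx) => a b a_gt0 b_gt0.
have a_neq0 : (a%:R : R) != 0 by rewrite pnatr_eq0 -lt0n.
have b_neq0 : (b%:R : R) != 0 by rewrite pnatr_eq0 -lt0n.
have -> : 2 - a%:R^-1 - b%:R^-1 = (2 * (a%:R * b%:R) - b%:R - a%:R) / (a%:R * b%:R) :> R.
  by field; rewrite a_neq0 b_neq0.
rewrite ler_pdivrMr ?mulr_gt0 ?ltr0n // mul1r lerBlDr lerBlDr -!natrM -!natrD ler_nat.
move=> h; have [->|a_neq1] := eqVneq a 1%N; first by constructor.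
have [->|b_neq1] := eqVneq b 1%N; first by constructor.
by constructor; nia.
Qed.

Lemma kappa_eq0_of_flat_deg x y : adj x y -> flat_deg x y -> kappa nb x y = 0.
Proof.
move=> hxy hdeg; have hyx : adj y x by rewrite adj_sym.
suff [pi hpi hsupp] : exists2 pi, coupling nb x y pi & edge_supported pi.
  exact: kappa_eq0 tri hxy hpi hsupp.
have [dx1|nx1] := eqVneq (deg x) 1%N; first exact: leaf_coupling.
have [dy1|ny1] := eqVneq (deg y) 1%N.
  have [pi hpi hsupp] := leaf_coupling hyx dy1.
  by exists (fun u v => pi v u); [apply: coupling_transpose | apply: edge_supported_transpose].
apply: deg2_coupling => //.
  by case: hdeg (deg_gt0 hxy) => [||[]]; lia.
by case: hdeg (deg_gt0 hyx) => [||[]]; lia.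
Qed.

Lemma ricci_flatP : ricci_flat nb <-> flat_edge_condition (edge nb).
Proof.
split=> [flat x y hxy|cond x y hxy].
  by apply/(flat_degP hxy); apply: flat_deg_of_kappa_eq0 (flat x y hxy).
by apply: kappa_eq0_of_flat_deg => //; apply/(flat_degP hxy)/cond.
Qed.

End FreeOfShortCycles.

Lemma ricci_flat_girth5P :
  ricci_flat nb /\ girth_ge nb 5 <-> flat_girth5 (edge nb).
Proof.
by rewrite girth_ge5P; split=> [[flat [tri sq]]|[tri sq cond]];
  split=> //; apply/(ricci_flatP tri sq).
Qed.

Lemma connected_ind (P : V -> Prop) s :
  P s -> (forall v w, P v -> adj v w -> P w) -> forall v, P v.
Proof.
move=> Ps closed v; case: (connectedG s v) => p; rewrite /walk.
elim: p s Ps => [|a p IH] s Ps /=; first by move=> /eqP <-.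
by case/andP => /andP[h1 h2] h3; apply: (IH a (closed s a Ps h1)); rewrite h2.
Qed.

Lemma isomorphic_of_enum (W : Type) (r : W -> W -> Prop) (e : W -> V) (i0 : W) :
  injective e -> (forall i j, r i j <-> adj (e i) (e j)) ->
  (forall i w, adj (e i) w -> exists j, e j = w) -> isomorphic nb r.
Proof.
move=> e_inj e_rel e_nb.
have e_surj v : exists i, e i = v.
  apply: (connected_ind (P := fun v => exists i, e i = v) (s := e i0)).
    by exists i0.
  by move=> _ w [i <-]; apply: e_nb.
pose f v := proj1_sig (cid (e_surj v)).
have fK v : e (f v) = v by rewrite /f; case: cid.
exists f; split; first by exists e => // i; apply: e_inj; rewrite fK.
by move=> x y; rewrite e_rel !fK.
Qed.

Lemma exists_edge : (exists x y : V, x != y) -> exists s t, adj s t.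
Proof.
case=> x [y nxy]; case: (connectedG x y) => [[|a p]]; rewrite /walk /=.
  by move/eqP => e; rewrite e eqxx in nxy.
by case/andP => /andP[hxa _] _; exists x, a.
Qed.

Lemma flat_girth5_of_isomorphic (W : Type) (r : W -> W -> Prop) :
  isomorphic nb r -> flat_girth5 r -> flat_girth5 (edge nb).
Proof. by case=> f [[g fK _] f_rel]; apply: flat_girth5_inj (can_inj fK) f_rel. Qed.

Definition max_deg_le2 : Prop :=
  forall x a b d, adj x a -> adj x b -> adj x d -> a = b \/ a = d \/ b = d.

(* A neighbour of [u] other than [p]; it is [u] itself when there is none. *)
Definition forward (p u : V) : V := head u [seq z <- nb u | z != p].

Fixpoint nbwalk (p u : V) (k : nat) : V :=
  if k is k'.+1 then nbwalk u (forward p u) k' else p.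

Definition extendable (p u : V) : Prop := exists z, adj u z /\ z != p.

Lemma forwardP p u : extendable p u -> adj u (forward p u) /\ forward p u != p.
Proof.
case=> z [hz nz]; rewrite /forward.
have : z \in [seq z <- nb u | z != p] by rewrite mem_filter nz.
case E: [seq z <- nb u | z != p] => [|h l] //= _.
have : h \in [seq z <- nb u | z != p] by rewrite E mem_head.
by rewrite mem_filter => /andP[].
Qed.

Lemma nbwalkSS k p u : nbwalk p u k.+2 = forward (nbwalk p u k) (nbwalk p u k.+1).
Proof. by elim: k p u => [|k IH] p u //=; rewrite -IH. Qed.

Section Classification.
Hypotheses (tri : triangle_free (edge nb)) (sq : square_free (edge nb)).

Section Leafless.
Hypothesis deg_le2 : max_deg_le2.
Hypothesis leafless : forall p u, adj u p -> extendable p u.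

Lemma nbwalk_adj p u : adj p u -> forall k, adj (nbwalk p u k) (nbwalk p u k.+1).
Proof.
move=> hpu k; elim: k p u hpu => [|k IH] p u hpu //=.
by rewrite adj_sym in hpu; apply: IH; case: (forwardP (leafless hpu)).
Qed.

Lemma nbwalk_nonback p u : adj p u -> forall k, nbwalk p u k.+2 != nbwalk p u k.
Proof.
move=> hpu k; elim: k p u hpu => [|k IH] p u; rewrite adj_sym => hup.
  by rewrite nbwalkSS; case: (forwardP (leafless hup)).
by apply: IH; case: (forwardP (leafless hup)).
Qed.

Variables s t : V.
Hypothesis hst : adj s t.

(* The two-sided non-backtracking walk through the edge s t, with s at 0 and t at 1. *)
Definition biwalk (i : int) : V :=
  match i with Posz k => nbwalk s t k | Negz k => nbwalk t s k.+2 end.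

Lemma biwalkN (k : nat) : biwalk (- k%:Z) = nbwalk t s k.+1.
Proof. by case: k. Qed.

Lemma biwalk_adj i : adj (biwalk i) (biwalk (i + 1)).
Proof.
have hts : adj t s by rewrite adj_sym.
have [k [->|->]] := int_cases i.
  by rewrite (_ : k%:Z + 1 = k.+1%:Z); [exact: (nbwalk_adj hst) | lia].
rewrite (_ : - k.+1%:Z + 1 = - k%:Z); last by lia.
by rewrite !biwalkN adj_sym; apply: (nbwalk_adj hts).
Qed.

Lemma biwalk_nonback i : biwalk (i + 1) != biwalk (i - 1).
Proof.
have hts : adj t s by rewrite adj_sym.
have [[|k] [->|->]] := int_cases i.
- have -> : 0 - 1 = - 1%:Z by [].
  by rewrite biwalkN eq_sym; apply: (nbwalk_nonback hts 0).
- have -> : - 1%:Z + 1 = - 0%:Z by [].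
  have -> : - 1%:Z - 1 = - 2%:Z by [].
  by rewrite !biwalkN eq_sym; apply: (nbwalk_nonback hts 1).
- have -> : k.+1%:Z + 1 = k.+2%:Z by lia.
  have -> : k.+1%:Z - 1 = k%:Z by lia.
  exact: (nbwalk_nonback hst k).
- have -> : - k.+2%:Z + 1 = - k.+1%:Z by lia.
  have -> : - k.+2%:Z - 1 = - k.+3%:Z by lia.
  by rewrite !biwalkN eq_sym; apply: (nbwalk_nonback hts k.+2).
Qed.

Lemma biwalk_nb i v : adj (biwalk i) v -> v = biwalk (i - 1) \/ v = biwalk (i + 1).
Proof.
move=> hv; have hpred : adj (biwalk i) (biwalk (i - 1)).
  by rewrite adj_sym; have := biwalk_adj (i - 1); rewrite subrK.
case: (deg_le2 hpred (biwalk_adj i) hv) => [E|[E|E]]; [|by left|by right].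
by have := biwalk_nonback i; rewrite E eqxx.
Qed.

Lemma line_of_biwalk_inj : injective biwalk -> isomorphic nb line_graph.
Proof.
move=> inj; apply: (isomorphic_of_enum (e := biwalk) 0) => // [i j|i w /biwalk_nb].
  rewrite /line_graph; split=> [[<-|<-]|/biwalk_nb [/inj|/inj]]; try lia.
    exact: biwalk_adj.
  by rewrite adj_sym; apply: biwalk_adj.
by case=> ->; eexists.
Qed.

Section Period.
Variables (a : int) (d : nat).
Hypothesis period : biwalk a = biwalk (a + d%:Z).
Hypothesis min_period : forall (d' : nat) b, (0 < d' < d)%N -> biwalk b != biwalk (b + d'%:Z).
Hypothesis d_ge3 : (3 <= d)%N.

Lemma biwalk_period_inj (i j : nat) : (i < d)%N -> (j < d)%N ->
  biwalk (a + i%:Z) = biwalk (a + j%:Z) -> i = j.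
Proof.
move=> hi hj E; case: (ltngtP i j) => // ij; exfalso.
  have := @min_period (j - i) (a + i%:Z) (ltac:(lia)).
  by rewrite (_ : a + i%:Z + (j - i)%N%:Z = a + j%:Z) ?E ?eqxx //; lia.
have := @min_period (i - j) (a + j%:Z) (ltac:(lia)).
by rewrite (_ : a + j%:Z + (i - j)%N%:Z = a + i%:Z) ?E ?eqxx //; lia.
Qed.

(* By minimality of the period the walk cannot turn back at a, so it closes up. *)
Lemma biwalk_pred_base : biwalk (a - 1) = biwalk (a + d.-1%:Z).
Proof.
have : adj (biwalk (a + d%:Z)) (biwalk (a - 1)).
  by rewrite -period adj_sym; have := biwalk_adj (a - 1); rewrite subrK.
case/biwalk_nb => E; first by rewrite E; congr biwalk; lia.
have : adj (biwalk (a + d%:Z)) (biwalk (a + 1)) by rewrite -period biwalk_adj.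
case/biwalk_nb => E'; last by have := biwalk_nonback a; rewrite E E' eqxx.
have := @min_period (d - 2) (a + 1) (ltac:(lia)).
by rewrite (_ : a + 1 + (d - 2)%N%:Z = a + d%:Z - 1) ?E' ?eqxx //; lia.
Qed.

Definition cyc_succ (i : nat) : nat := if i.+1 == d then 0%N else i.+1.
Definition cyc_pred (i : nat) : nat := if i == 0%N then d.-1 else i.-1.

Lemma cyc_succ_lt i : (i < d)%N -> (cyc_succ i < d)%N.
Proof. by rewrite /cyc_succ; case: eqP; lia. Qed.

Lemma cyc_pred_lt i : (i < d)%N -> (cyc_pred i < d)%N.
Proof. by rewrite /cyc_pred; case: eqP; lia. Qed.

Lemma biwalk_succ (i : nat) : (i < d)%N ->
  biwalk (a + i%:Z + 1) = biwalk (a + (cyc_succ i)%:Z).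
Proof.
move=> hi; rewrite /cyc_succ; case: eqP => h; last by congr biwalk; lia.
by rewrite addr0 period; congr biwalk; lia.
Qed.

Lemma biwalk_pred (i : nat) : (i < d)%N ->
  biwalk (a + i%:Z - 1) = biwalk (a + (cyc_pred i)%:Z).
Proof.
move=> hi; rewrite /cyc_pred; case: eqP => [->|h]; last by congr biwalk; lia.
by rewrite addr0 biwalk_pred_base.
Qed.

Lemma cycle_of_period : isomorphic nb (@cycle_graph d).
Proof.
have d_gt0 : (0 < d)%N by lia.
have cycE (i j : 'I_d) : cycle_graph i j <-> (j : nat) = cyc_succ i \/ (i : nat) = cyc_succ j.
  rewrite cycle_graphE /cyc_succ; have := ltn_ord i; have := ltn_ord j.
  by case: eqP; case: eqP; lia.
have pred_succ i j : (i < d)%N -> (j < d)%N -> (j == cyc_pred i) = (i == cyc_succ j).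
  rewrite /cyc_pred /cyc_succ => hi hj.
  by case: eqP; case: eqP; case: eqP; case: eqP; lia.
pose e (i : 'I_d) := biwalk (a + (i : nat)%:Z).
apply: (isomorphic_of_enum (e := e) (Ordinal d_gt0)).
- by move=> i j /biwalk_period_inj E; apply: val_inj; apply: E.
- move=> i j; rewrite cycE /e; split.
    case=> ->; rewrite -biwalk_succ //; first exact: biwalk_adj.
    by rewrite adj_sym biwalk_adj.
  case/biwalk_nb; rewrite ?biwalk_pred ?biwalk_succ // => /biwalk_period_inj E.
    by right; apply/eqP; rewrite -pred_succ // E ?cyc_pred_lt.
  by left; rewrite E ?cyc_succ_lt.
- move=> i w /biwalk_nb; rewrite ?biwalk_pred ?biwalk_succ // => -[->|->].
    by exists (Ordinal (cyc_pred_lt (ltn_ord i))).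
  by exists (Ordinal (cyc_succ_lt (ltn_ord i))).
Qed.

Lemma period_ge5 : (5 <= d)%N.
Proof.
have walk_step (i : nat) : adj (biwalk (a + i%:Z)) (biwalk (a + i.+1%:Z)).
  by rewrite (_ : a + i.+1%:Z = a + i%:Z + 1) ?biwalk_adj //; lia.
have := walk_step 0%N; have := walk_step 1%N; have := walk_step 2%N; have := walk_step 3%N.
rewrite addr0 => h3 h2 h1 h0; rewrite leqNgt; apply/negP => d_lt5.
have [d3|d4] : d = 3%N \/ d = 4%N by lia.
  by rewrite -d3 -period in h2; apply: (@tri _ _ _ h0 h1 h2).
rewrite -d4 -period in h3; apply: (@sq _ _ _ _ h0 h1 h2 h3); apply/eqP.
  exact: (@min_period 2 a (ltac:(lia))).
have := @min_period 2 (a + 1) (ltac:(lia)).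
by rewrite (_ : a + 1 + 2%:Z = a + 3%:Z) //; lia.
Qed.

End Period.

Definition biwalk_period (d : nat) : bool :=
  (0 < d)%N && `[< exists a, biwalk a = biwalk (a + d%:Z) >].

Lemma biwalk_periodic : ~ injective biwalk -> exists d, biwalk_period d.
Proof.
move=> ninj; have [i [j [nij E]]] : exists i j, i <> j /\ biwalk i = biwalk j.
  apply: contrapT => H; apply: ninj => i j E; apply: contrapT => nij.
  by apply: H; exists i, j.
case: (ltgtP i j) => [ij|ij|ij] //.
  exists `|j - i|%N; apply/andP; split; first lia.
  by apply/asboolP; exists i; rewrite E; congr biwalk; lia.
exists `|i - j|%N; apply/andP; split; first lia.
by apply/asboolP; exists j; rewrite -E; congr biwalk; lia.
Qed.

Lemma cycle_of_biwalk_not_inj : ~ injective biwalk ->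
  exists n, (5 <= n)%N /\ isomorphic nb (@cycle_graph n).
Proof.
move=> /biwalk_periodic ex; case: (ex_minnP ex) => d /andP[d_gt0 /asboolP [a period]] dmin.
have min_period (d' : nat) b : (0 < d' < d)%N -> biwalk b != biwalk (b + d'%:Z).
  move=> hd'; apply/eqP => E; have : biwalk_period d'.
    by apply/andP; split; [lia | apply/asboolP; exists b].
  by move/dmin; lia.
have d_ge3 : (3 <= d)%N.
  rewrite leqNgt; apply/negP => d_lt3; have [d1|d2] : d = 1%N \/ d = 2%N by lia.
    have := biwalk_adj a.
    by rewrite (_ : a + 1 = a + d%:Z) -?period ?(negbTE (adj_irr _)) //; lia.
  have := biwalk_nonback (a + 1).
  by rewrite addrK (_ : a + 1 + 1 = a + d%:Z) -?period ?eqxx //; lia.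
exists d; split; first exact: period_ge5 period min_period d_ge3.
exact: cycle_of_period period min_period d_ge3.
Qed.

End Leafless.

Section Leaf.
Hypothesis deg_le2 : max_deg_le2.
Variables s t : V.
Hypothesis hst : adj s t.
Hypothesis leaf_s : unique_neighbour (edge nb) s t.

Local Notation w := (nbwalk s t).

Definition extendable_upto (k : nat) : Prop :=
  forall i, (0 < i < k)%N -> extendable (w i.-1) (w i).

Lemma extendable_upto_le k k' : extendable_upto k' -> (k <= k')%N -> extendable_upto k.
Proof. by move=> h hk i hi; apply: h; lia. Qed.

Lemma walk_adj k : extendable_upto k -> forall i, (i < k)%N -> adj (w i) (w i.+1).
Proof.
by move=> hk [|i] hi //; rewrite nbwalkSS; case: (forwardP (hk i.+1 (ltac:(lia)))).
Qed.

Lemma walk_nonback k : extendable_upto k -> forall i, (0 < i < k)%N -> w i.+1 != w i.-1.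
Proof. by move=> hk [|i] hi //; rewrite nbwalkSS; case: (forwardP (hk i.+1 hi)). Qed.

Lemma walk_nb k : extendable_upto k -> forall i v, (0 < i < k)%N ->
  adj (w i) v -> v = w i.-1 \/ v = w i.+1.
Proof.
move=> hk [|i] v hi hv //=.
have hpred : adj (w i.+1) (w i) by rewrite adj_sym (walk_adj hk) //; lia.
have hsucc : adj (w i.+1) (w i.+2) by apply: (walk_adj hk); lia.
case: (deg_le2 hpred hsucc hv) => [E|[E|E]]; [|by left|by right].
by have := walk_nonback hk hi; rewrite E eqxx.
Qed.

Lemma walk_inj k : extendable_upto k -> forall i j, (i <= k)%N -> (j <= k)%N ->
  w i = w j -> i = j.
Proof.
elim: k => [|k IH] hk i j hi hj E; first lia.
have hk' := extendable_upto_le hk (leqnSn k).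
have new i0 : (i0 <= k)%N -> w k.+1 <> w i0.
  move=> hi0 E0; have hA := walk_adj hk (ltnSn k).
  have [e|ne] := eqVneq i0 k; first by move: hA; rewrite E0 e (negbTE (adj_irr _)).
  have [e|ne2] := eqVneq i0 k.-1.
    by have := walk_nonback hk (i := k) (ltac:(lia)); rewrite E0 e eqxx.
  have [e|ne3] := eqVneq i0 0%N.
    move: hA; rewrite E0 e adj_sym => /leaf_s Ek.
    by have := IH hk' k 1%N (leqnn k) (ltac:(lia)) Ek; lia.
  move: hA; rewrite E0 adj_sym => /(walk_nb hk (i := i0) (ltac:(lia))) [] E1.
    by have := IH hk' k i0.-1 (leqnn k) (ltac:(lia)) E1; lia.
  by have := IH hk' k i0.+1 (leqnn k) (ltac:(lia)) E1; lia.
case: (leqP i k) => hi'; case: (leqP j k) => hj'.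
- exact: IH.
- by case: (new i hi'); rewrite E (_ : j = k.+1) //; lia.
- by case: (new j hj'); rewrite -E (_ : i = k.+1) //; lia.
- lia.
Qed.

Lemma path_of_stuck m : (0 < m)%N -> extendable_upto m -> ~ extendable (w m.-1) (w m) ->
  isomorphic nb (@path_graph m.+1).
Proof.
move=> m_gt0 hm stuck.
have path_nb i v : (i <= m)%N -> adj (w i) v ->
    exists j, [/\ (j <= m)%N, v = w j & i.+1 = j \/ j.+1 = i].
  move=> hi hv; have [i0|i_gt0] := posnP i.
    by exists 1%N; split; [lia | move: hv; rewrite i0 => /leaf_s | left; rewrite i0].
  have [im|i_ltm] := eqVneq i m.
    exists m.-1; split; [lia | | right; lia].
    by apply: contrapT => nv; apply: stuck; exists v; split; [rewrite -im | apply/eqP].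
  case: (walk_nb hm (_ : 0 < i < m)%N hv) => [|->|->]; first lia.
    by exists i.-1; split; [lia | | right; lia].
  by exists i.+1; split; [lia | | left].
apply: (isomorphic_of_enum (e := fun i : 'I_m.+1 => w i) ord0).
- by move=> i j /(walk_inj hm) E; apply/val_inj/E; rewrite -ltnS.
- move=> i j; rewrite /path_graph; have := ltn_ord i; have := ltn_ord j => hj hi.
  split=> [[E|E]|].
  + by rewrite -E; apply: (walk_adj hm); lia.
  + by rewrite -E adj_sym; apply: (walk_adj hm); lia.
  move=> /(path_nb i _ (_ : i <= m)%N) [|j' [hj' E h]]; first lia.
  by have := walk_inj hm (_ : j <= m)%N hj' E; lia.
- move=> i v /(path_nb i v (_ : i <= m)%N) [|j [hj -> _]]; first by have := ltn_ord i; lia.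
  by exists (Ordinal (hj : (j < m.+1)%N)).
Qed.

Lemma ray_of_extendable : (forall k, extendable_upto k) -> isomorphic nb ray_graph.
Proof.
move=> hk.
have ray_nb i v : adj (w i) v -> v = w i.+1 \/ (0 < i)%N /\ v = w i.-1.
  case: i => [/leaf_s|i hv]; first by left.
  by case: (walk_nb (hk i.+2) (_ : 0 < i.+1 < i.+2)%N hv) => [|->|->]; [lia|right|left].
have w_inj i j : w i = w j -> i = j by apply: (walk_inj (hk (maxn i j))); lia.
apply: (isomorphic_of_enum (e := w) 0%N) => [//|i j|i v /ray_nb [->|[_ ->]]].
- rewrite /ray_graph; split=> [[<-|<-]|/ray_nb [/w_inj|[i_gt0 /w_inj]]]; try lia.
    exact: (walk_adj (hk i.+1)).
  by rewrite adj_sym; apply: (walk_adj (hk j.+1)).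
- by eexists.
- by eexists.
Qed.

End Leaf.

Lemma leaf_classification s t : max_deg_le2 -> adj s t -> unique_neighbour (edge nb) s t ->
  (exists n, (2 <= n)%N /\ isomorphic nb (@path_graph n)) \/ isomorphic nb ray_graph.
Proof.
move=> deg_le2 hst leaf_s; pose w := nbwalk s t.
have [ext|] := pselect (forall k, extendable_upto s t k).
  by right; apply: (ray_of_extendable deg_le2 hst leaf_s ext).
move=> not_ext; left.
have ex : exists m, (0 < m)%N && ~~ `[< extendable (w m.-1) (w m) >].
  apply: contrapT => H; apply: not_ext => k i hi; apply: contrapT => stuck.
  by apply: H; exists i; apply/andP; split; [lia | apply/asboolP].
case: (ex_minnP ex) => m /andP[m_gt0 /asboolP stuck] m_min.
exists m.+1; split; first lia.
apply: (path_of_stuck deg_le2 hst leaf_s m_gt0) => // i hi.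
apply: contrapT => not_ext_i.
have : (0 < i)%N && ~~ `[< extendable (w i.-1) (w i) >].
  by apply/andP; split; [lia | apply/asboolP].
by move/m_min; lia.
Qed.

Lemma leafless_classification s t : max_deg_le2 -> adj s t ->
  (forall p u, adj u p -> extendable p u) ->
  isomorphic nb line_graph \/ exists n, (5 <= n)%N /\ isomorphic nb (@cycle_graph n).
Proof.
move=> deg_le2 hst leafless.
have [inj|not_inj] := pselect (injective (biwalk s t)).
  by left; apply: (line_of_biwalk_inj deg_le2 leafless hst inj).
by right; apply: (cycle_of_biwalk_not_inj deg_le2 leafless hst not_inj).
Qed.

Hypothesis cond : flat_edge_condition (edge nb).

Lemma star_of_claw c a b d : adj c a -> adj c b -> adj c d ->
  a != b -> a != d -> b != d ->
  exists n, (3 <= n)%N /\ isomorphic nb (@star_graph n).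
Proof.
move=> hca hcb hcd /eqP nab /eqP nad /eqP nbd.
have leaf u : adj c u -> unique_neighbour (edge nb) u c.
  move=> hcu; case: (cond hcu) => // [H|[H _]]; exfalso.
    by apply: nab; rewrite (H a hca) (H b hcb).
  have := H a b hca hcb; have := H a d hca hcd; have := H b d hcb hcd.
  by intuition congruence.
have deg_c : (2 <= deg c)%N.
  apply: (@uniq_leq_size _ [:: a; b]); first by rewrite /= inE andbT; apply/eqP.
  by move=> z; rewrite !inE => /orP[] /eqP ->.
have nb_neq_c k : (k < deg c)%N -> nth c (nb c) k != c.
  by move=> hk; apply/eqP => E; have := adj_irr c; rewrite /Defs.adj -{1}E mem_nth.
have nb_adj k : (k < deg c)%N -> adj c (nth c (nb c) k) by apply: mem_nth.
pose e (i : 'I_(deg c).+1) := if i : nat is k.+1 then nth c (nb c) k else c.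
exists (deg c).+1; split=> //; apply: (isomorphic_of_enum (e := e) ord0).
- move=> [[|i] hi] [[|j] hj]; rewrite /e /= => E; apply: val_inj => //=.
  + by move: (nb_neq_c j hj); rewrite -E eqxx.
  + by move: (nb_neq_c i hi); rewrite E eqxx.
  + by move/eqP: E; rewrite nth_uniq ?nb_uniq // => /eqP ->.
- move=> [[|i] hi] [[|j] hj]; rewrite /e /star_graph /=.
  + by split; [lia | rewrite (negbTE (adj_irr c))].
  + by split=> _; [apply: nb_adj | lia].
  + by split=> _; [rewrite adj_sym; apply: nb_adj | lia].
  + split=> [|/(leaf _ (nb_adj i hi)) E]; first lia.
    by have := nb_neq_c j hj; rewrite E eqxx.
- move=> [[|i] hi] w; rewrite /e /=.
    move=> hcw; have hw : ((index w (nb c)).+1 < (deg c).+1)%N by rewrite ltnS index_mem.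
    by exists (Ordinal hw); rewrite /e /= nth_index.
  by move=> /(leaf _ (nb_adj i hi)) ->; exists ord0.
Qed.

Lemma classification : (exists x y : V, x != y) ->
  (exists n, (2 <= n)%N /\ isomorphic nb (@path_graph n)) \/
  isomorphic nb ray_graph \/
  isomorphic nb line_graph \/
  (exists n, (5 <= n)%N /\ isomorphic nb (@cycle_graph n)) \/
  (exists n, (3 <= n)%N /\ isomorphic nb (@star_graph n)).
Proof.
move=> /exists_edge [s [t hst]].
have [[c [a [b [d [hca hcb hcd /and3P[nab nad nbd]]]]]]|no_claw] := pselect
    (exists c a b d, [/\ adj c a, adj c b, adj c d & [&& a != b, a != d & b != d]]).
  by do 4!right; apply: star_of_claw hca hcb hcd nab nad nbd.
have deg_le2 : max_deg_le2.
  move=> c a b d hca hcb hcd; apply: contrapT => H; apply: no_claw.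
  exists c, a, b, d; split=> //.
  by apply/and3P; split; apply/eqP => E; apply: H; auto.
have [[u [v [huv leaf_u]]]|no_leaf] :=
    pselect (exists u v, adj u v /\ unique_neighbour (edge nb) u v).
  by case: (leaf_classification deg_le2 huv leaf_u); auto.
have leafless p u : adj u p -> extendable p u.
  move=> hup; apply: contrapT => H; apply: no_leaf; exists u, p; split=> // z huz.
  by apply: contrapT => nzp; apply: H; exists z; split=> //; apply/eqP.
by case: (leafless_classification deg_le2 hst leafless); auto.
Qed.
End Classification.
End Graph.

Theorem corollary3p4 (V : eqType) (nb : V -> seq V) :
  lf_simple_graph nb -> connected nb -> (exists x y : V, x != y) ->
  (ricci_flat nb /\ girth_ge nb 5 <->
   (exists n, (2 <= n)%N /\ isomorphic nb (@path_graph n)) \/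
   isomorphic nb ray_graph \/
   isomorphic nb line_graph \/
   (exists n, (5 <= n)%N /\ isomorphic nb (@cycle_graph n)) \/
   (exists n, (3 <= n)%N /\ isomorphic nb (@star_graph n))).
Proof.
move=> graphG connectedG two_vertices; rewrite ricci_flat_girth5P //.
split=> [[tri sq cond]|]; first exact: classification.
case=> [[n [_ iso]]|[iso|[iso|[[n [n_ge5 iso]]|[n [_ iso]]]]]];
  apply: (flat_girth5_of_isomorphic iso).
- exact: flat_girth5_path.
- exact: flat_girth5_ray.
- exact: flat_girth5_line.
- exact: flat_girth5_cycle.
- exact: flat_girth5_star.
Qed.
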